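(* Let $k \geq 14$ be an integer. Then $N(k,5) \geq 6k+4$. If, additionally, $k \equiv 5 \pmod{10}$, then $N(k,5) \geq 6k+5$.
   Context: A $k$-power is a word of the form $u^k$ (concatenation of $k$ copies of $u$) with $u$ nonempty. A $5$-antipower is a word $u_1 \cdots u_5$ with $|u_1| = \cdots = |u_5|$ and $u_1,\dots,u_5$ pairwise distinct. $N(k,r)$ is the smallest integer $\ell$ such that every binary word of length $\ell$ contains either a $k$-power or an $r$-antipower as a factor (contiguous subword). *)

From mathcomp Require Import all_boot.
Set Implicit Arguments. Unset Strict Implicit. Unset Printing Implicit Defensive.

Definition factor (w s : seq bool) : bool := infix w s.

Definition is_kpower (k : nat) (w : seq bool) : Prop :=
  exists u : seq bool, u != [::] /\ w = flatten (nseq k u).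

Definition is_antipower (r : nat) (w : seq bool) : Prop :=
  exists us : seq (seq bool),
    [/\ size us = r, w = flatten us,
        (forall u v, u \in us -> v \in us -> size u = size v) & uniq us].

Definition has_pow_or_antipow (k r : nat) (s : seq bool) : Prop :=
  exists w, factor w s /\ (is_kpower k w \/ is_antipower r w).

(* The defining property of N(k,r): every binary word of length l contains
   a k-power or an r-antipower. N(k,r) is the least l with this property. *)
Definition N_prop (k r l : nat) : Prop :=
  forall s : seq bool, size s = l -> has_pow_or_antipow k r s.

(* "N(k,r) >= m": every l satisfying the defining property is >= m
   (equivalently the least such l, if it exists, is >= m). *)
Definition N_ge (k r m : nat) : Prop := forall l, N_prop k r l -> m <= l.

From mathcomp Require Import all_boot zify.
Set Implicit Arguments. Unset Strict Implicit. Unset Printing Implicit Defensive.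

(* The witnesses are alternating words 0101... with a few defects, a defect at d
   meaning that letter d+1 repeats letter d instead of flipping: for even k the
   defects are k+1, 3k, 3k+1, 5k, for odd k they are 0, 1, 2, 3, 2k+2, 2k+3, 4k+2,
   4k+3, 6k+2.  A k-power u^k in a word of length < 7k has period p = |u| <= 6;
   every window of length 2k-1 contains a defect, and periodicity then yields two
   defects at distance 4p, in [4, 24], a distance that never occurs between these
   defects.  In a 5-antipower with blocks of length m, m = 1 is excluded by the
   pigeonhole principle; for m >= 2, a block containing no defect is determined by
   its first letter, and a case analysis on where the ten block boundaries fall
   among the defects always finds two such blocks starting with the same letter.
   When k = 5 (mod 10), this analysis still succeeds for the odd word of length
   6k+4. *)

Lemma size_flatten_uniform (T : eqType) (ss : seq (seq T)) m :
  (forall s, s \in ss -> size s = m) -> size (flatten ss) = size ss * m.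
Proof.
elim: ss => //= s ss IH hsz.
by rewrite size_cat hsz ?mem_head // IH // => s' hs'; apply: hsz; rewrite inE hs' orbT.
Qed.

Lemma nth_flatten_uniform (T : eqType) (x0 : T) (ss : seq (seq T)) m t i :
  (forall s, s \in ss -> size s = m) -> t < size ss -> i < m ->
  nth x0 (flatten ss) (t * m + i) = nth x0 (nth [::] ss t) i.
Proof.
elim: ss t => [|s ss IH] [|t] //= hsz ht hi; have hs := hsz s (mem_head _ _).
  by rewrite mul0n add0n nth_cat hs hi.
rewrite nth_cat hs mulSn -addnA ltnNge leq_addr /= addKn IH // => s' hs'.
by apply: hsz; rewrite inE hs' orbT.
Qed.

Lemma factor_mkseqP (f : nat -> bool) l w : factor w (mkseq f l) ->
  exists2 a, a + size w <= l & forall j, j < size w -> nth false w j = f (a + j).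
Proof.
case/infixP=> [p [q e]]; have hl : size p + size w <= l.
  by rewrite -(size_mkseq f l) e !size_cat addnA leq_addr.
exists (size p) => // j hj; rewrite -(nth_mkseq false f (_ : _ < l)).
  by rewrite e nth_cat ltnNge leq_addr /= addKn nth_cat hj.
by apply: leq_trans hl; rewrite ltn_add2l.
Qed.

Lemma factor_kpower_periodic (f : nat -> bool) l k u :
  factor (flatten (nseq k u)) (mkseq f l) ->
  exists2 a, a + k * size u <= l & forall x y, x < k * size u -> y < k * size u ->
    x = y %[mod size u] -> f (a + x) = f (a + y).
Proof.
set p := size u; have hsz v : v \in nseq k u -> size v = p by case/nseqP=> ->.
case/factor_mkseqP=> a; rewrite (size_flatten_uniform hsz) size_nseq => ha hnth.
have letterE z : z < k * p -> f (a + z) = nth false u (z %% p).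
  move=> hz; have hp : 0 < p by nia.
  rewrite -hnth ?(size_flatten_uniform hsz) ?size_nseq // {1}(divn_eq z p).
  rewrite (nth_flatten_uniform _ hsz) ?size_nseq ?ltn_divLR ?ltn_pmod //.
  by rewrite nth_nseq ltn_divLR // hz.
by exists a => // x y hx hy exy; rewrite !letterE // exy.
Qed.

Lemma factor_antipower_blocks (f : nat -> bool) l r w : 1 < r ->
  factor w (mkseq f l) -> is_antipower r w ->
  exists a m, [/\ 0 < m, a + r * m <= l & forall t t', t < t' < r ->
    ~ (forall i, i < m -> f (a + t * m + i) = f (a + t' * m + i))].
Proof.
move=> hr hf [us [hs hw hsz hu]]; set m := size (nth [::] us 0).
have hm v : v \in us -> size v = m by move=> hv; apply: hsz; rewrite // mem_nth ?hs // ltnW.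
have sizeE t : t < r -> size (nth [::] us t) = m by move=> ht; rewrite hm ?mem_nth ?hs.
have [a] := factor_mkseqP hf; rewrite hw (size_flatten_uniform hm) hs => ha hnth.
have blockE t i : t < r -> i < m -> nth false (nth [::] us t) i = f (a + t * m + i).
  move=> ht hi; rewrite -(nth_flatten_uniform _ hm) ?hs // hnth -?addnA //; nia.
have blocks_differ t t' : t < t' < r -> nth [::] us t != nth [::] us t'.
  by move=> htt'; rewrite nth_uniq ?hs //; lia.
have hm0 : 0 < m.
  case: (posnP m) => // m0; have := blocks_differ 0 1 hr.
  have empty t : t < r -> nth [::] us t = [::] by move=> ht; apply: size0nil; rewrite sizeE.
  by rewrite !empty ?eqxx // ltnW.
exists a, m; split=> // t t' htt' same; have /eqP := blocks_differ t t' htt'; apply.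
apply: (eq_from_nth (x0 := false)) => [|i]; rewrite ?sizeE //; try lia.
by move=> hi; rewrite !blockE //; try lia; apply: same.
Qed.

Lemma bool_pigeonhole (f : nat -> bool) : exists t t', t < t' < 3 /\ f t = f t'.
Proof.
case E0: (f 0); case E1: (f 1); case E2: (f 2); first
  [by exists 0, 1; rewrite E0 E1 | by exists 0, 2; rewrite E0 E2 | by exists 1, 2; rewrite E1 E2].
Qed.

Definition block_bounds a n :=
  flatten [seq [:: a + t * n.+1; a + t * n.+1 + n] | t <- iota 0 5].

Lemma nth_block_bounds (T : Type) (f : nat -> T) x0 a n t : t < 5 ->
  nth x0 [seq f p | p <- block_bounds a n] t.*2 = f (a + t * n.+1) /\
  nth x0 [seq f p | p <- block_bounds a n] t.*2.+1 = f (a + t * n.+1 + n).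
Proof. by case: t => [|[|[|[|[|]]]]]. Qed.

(* [v] lists the defect counts at the first and last letter of five consecutive
   blocks of length n+1 starting at a, and [pa], [pn] are the parities of a and n:
   block t then starts with the letter (pa + t(n+1) + v_(2t)) mod 2. *)
Definition twin_profile (pa pn : bool) (v : seq nat) :=
  let clean t := nth 0 v t.*2 == nth 0 v t.*2.+1 in
  let first_letter t := pa (+) (odd t && ~~ pn) (+) odd (nth 0 v t.*2) in
  has (fun t => has (fun t' =>
    [&& t < t', clean t, clean t' & first_letter t == first_letter t']) (iota 0 5)) (iota 0 5).

Arguments twin_profile : simpl never.

Section AlternatingWithDefects.

Variable D : seq nat.

Definition ndefects n := count (fun d => d < n) D.
Definition alt_letter n := odd (n + ndefects n).

Lemma ndefects_mono : {homo ndefects : x y / x <= y}.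
Proof. by move=> x y hxy; apply: sub_count => d /= /leq_trans; apply. Qed.

Lemma ndefectsS n : ndefects n.+1 = ndefects n + count_mem n D.
Proof.
rewrite /ndefects; elim: D => //= d s ->; rewrite ltnS eq_sym.
case: ltngtP => /= _; lia.
Qed.

Lemma alt_letterS n : alt_letter n.+1 = ~~ alt_letter n (+) odd (count_mem n D).
Proof. by rewrite /alt_letter ndefectsS addSn addnA oddS oddD addNb. Qed.

Lemma alt_letter_repeat_mem n : alt_letter n.+1 = alt_letter n -> n \in D.
Proof.
apply: contra_eqT => /count_memPn n_notin; rewrite alt_letterS n_notin addbF.
by case: alt_letter.
Qed.

Lemma ndefects_block_bounds_sorted a n :
  sorted leq [seq ndefects p | p <- block_bounds a n].
Proof. by apply: homo_sorted; [exact: ndefects_mono | rewrite /=; lia]. Qed.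

Hypothesis D_sorted : sorted ltn D.

Lemma mem_alt_letter_repeat n : n \in D -> alt_letter n.+1 = alt_letter n.
Proof.
move=> hn; rewrite alt_letterS count_uniq_mem ?hn ?(sorted_uniq ltn_trans ltnn) //.
by case: alt_letter.
Qed.

Lemma ndefects_bounds n :
  [/\ ndefects n <= size D, 0 < ndefects n -> nth 0 D (ndefects n).-1 < n
    & ndefects n < size D -> n <= nth 0 D (ndefects n)].
Proof.
rewrite /ndefects; elim: D D_sorted => //= d D' IH sD.
have [IHsize IHlow IHup] := IH (path_sorted sD).
case: ltnP => /= hd.
  rewrite add1n; split=> [|_|]; rewrite ?ltnS //.
  by case: (count _ D') IHlow => //= c; apply.
have -> : count (fun d => d < n) D' = 0.
  apply/eqP; rewrite -leqn0 leqNgt -has_count; apply/hasPn => x.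
  move/(allP (order_path_min ltn_trans sD)) => /= hx.
  by rewrite -leqNgt (leq_trans hd (ltnW hx)).
by split.
Qed.

Lemma alt_letter_shift s s' n i :
  ndefects s = ndefects (s + n) -> ndefects s' = ndefects (s' + n) ->
  alt_letter s = alt_letter s' -> i <= n -> alt_letter (s + i) = alt_letter (s' + i).
Proof.
have flat x : ndefects x = ndefects (x + n) -> i <= n -> ndefects (x + i) = ndefects x.
  move=> hx hi; apply/eqP; rewrite eqn_leq (ndefects_mono (leq_addr i x)) andbT hx.
  by apply: ndefects_mono; rewrite leq_add2l.
move=> hs hs' e hi; rewrite /alt_letter in e *.
by rewrite !flat // -!addnA ![i + _]addnC !addnA !(oddD _ i) e.
Qed.

Lemma alt_word_kpower_free k l : 6 <= k -> l < 7 * k ->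
  {in D &, forall x y, ~~ (x + 4 <= y <= x + 24)} ->
  (forall s, s + 2 * k <= l -> exists2 d, d \in D & s <= d <= s + 2 * k - 2) ->
  forall w, factor w (mkseq alt_letter l) -> ~ is_kpower k w.
Proof.
move=> hk hl sparse dense w hf [u [u0 hw]]; rewrite {w}hw in hf.
have [a ha periodic] := factor_kpower_periodic hf; set p := size u in ha periodic.
have hp : 0 < p by rewrite lt0n size_eq0.
have hp6 : p <= 6 by nia.
have [j hj repeat] : exists2 j, j.+1 < k * p & alt_letter (a + j).+1 = alt_letter (a + j).
  case: (ltnP 1 p) => hp1.
    have /dense [d hd /andP[ad dk]] : a + 2 * k <= l by nia.
    by exists (d - a); [nia | rewrite subnKC // mem_alt_letter_repeat].
  have p1 : p = 1 by lia.
  exists 0; first nia.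
  by rewrite addn0 -addn1 (periodic 1 0) ?addn0 ?p1 ?modn1 //; lia.
have defect y : y.+1 < k * p -> y = j %[mod p] -> a + y \in D.
  move=> hy hyj; apply: alt_letter_repeat_mem.
  rewrite -addnS (periodic y.+1 j.+1) ?(periodic y j) ?addnS //; try lia.
  by rewrite -addn1 -modnDml hyj modnDml addn1.
have r_in : a + j %% p \in D by apply: defect; rewrite ?modn_mod //; nia.
have r4_in : a + (4 * p + j %% p) \in D by apply: defect; rewrite ?modnMDl ?modn_mod //; nia.
by move: (sparse _ _ r_in r4_in); nia.
Qed.

Lemma twin_profileP a n :
  twin_profile (odd a) (odd n) [seq ndefects p | p <- block_bounds a n] ->
  exists t t', t < t' < 5 /\
    forall i, i <= n -> alt_letter (a + t * n.+1 + i) = alt_letter (a + t' * n.+1 + i).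
Proof.
case/hasP=> t; rewrite mem_iota add0n => /andP[_ ht].
case/hasP=> t'; rewrite mem_iota add0n => /andP[_ ht'].
have [-> ->] := nth_block_bounds ndefects 0 a n ht.
have [-> ->] := nth_block_bounds ndefects 0 a n ht'.
case/and4P=> htt' /eqP clean /eqP clean' /eqP same_first.
exists t, t'; split=> [|i]; first by rewrite htt'.
apply: alt_letter_shift => //.
by rewrite /alt_letter !oddD !oddM oddS.
Qed.

Lemma ndefects_block_steps a n :
  all (fun t => ndefects (a + t.+1 * n.+1) <= (ndefects (a + t * n.+1 + n)).+1) (iota 0 4).
Proof.
apply/allP=> t _.
rewrite (_ : a + t.+1 * n.+1 = (a + t * n.+1 + n).+1); last by rewrite mulSn; lia.
rewrite ndefectsS -[X in _ <= X]addn1 leq_add2l.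
by rewrite count_uniq_mem ?(sorted_uniq ltn_trans ltnn) ?leq_b1.
Qed.

Lemma alt_word_antipower_free l :
  (forall a n, 0 < n -> a + 5 * n.+1 <= l ->
    twin_profile (odd a) (odd n) [seq ndefects p | p <- block_bounds a n]) ->
  forall w, factor w (mkseq alt_letter l) -> ~ is_antipower 5 w.
Proof.
move=> twins w hf /(factor_antipower_blocks _ hf) [//|a [m [hm0 hl distinct]]].
case: m hm0 hl distinct => [//|[_ hl distinct|n _ hl distinct]].
  have [t [t' [htt' e]]] := bool_pigeonhole (fun t => alt_letter (a + t)).
  apply: (distinct t t'); first lia.
  by case=> // _; rewrite !muln1 !addn0.
have [t [t' [htt' same]]] := twin_profileP (twins a n.+1 isT hl).
by apply: (distinct t t' htt') => i hi; apply: same.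
Qed.

End AlternatingWithDefects.

Arguments ndefects : simpl never.

Definition even_defects k := [:: k.+1; 3 * k; 3 * k + 1; 5 * k].

Lemma even_defects_sorted k : 14 <= k -> sorted ltn (even_defects k).
Proof. by move=> hk /=; lia. Qed.

Variant even_ndefects_spec k n : nat -> Prop :=
  | EvenNdefects0 of n <= k.+1 : even_ndefects_spec k n 0
  | EvenNdefects1 of k.+1 < n <= 3 * k : even_ndefects_spec k n 1
  | EvenNdefects2 of n = 3 * k + 1 : even_ndefects_spec k n 2
  | EvenNdefects3 of 3 * k + 1 < n <= 5 * k : even_ndefects_spec k n 3
  | EvenNdefects4 of 5 * k < n : even_ndefects_spec k n 4.

Lemma even_ndefectsP k (hk : 14 <= k) n :
  even_ndefects_spec k n (ndefects (even_defects k) n).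
Proof.
have [] := ndefects_bounds (even_defects_sorted hk) n.
move: (ndefects _ n) => j; rewrite /even_defects /=.
by case: j => [|[|[|[|[|j]]]]] //= *; constructor; lia.
Qed.

Ltac case_parity :=
  match goal with |- context [odd ?x] => is_var x; case: (boolP (odd x)) => ? /= end.

Ltac decide_twin_profile :=
  intros; rewrite /twin_profile /=; repeat case_parity; done || (exfalso; lia).

Ltac prune_profile :=
  first [ lazymatch goal with
          |- is_true false -> _ => let h := fresh in intro h; discriminate h end
        | lazymatch goal with
          |- _ -> is_true false -> _ => let h := fresh in intros ? h; discriminate h end
        | exfalso; lia ].

(* Proves [sorted leq v -> unit steps of v -> twin_profile _ _ v] for the profile v
   of a concrete defect list, by casing on the interval ([spec]) of each block
   boundary.  A branch dies as soon as one of the two premises computes to false,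
   or when lia refutes its interval constraints. *)
Ltac enumerate_ndefects spec :=
  lazymatch goal with
  | |- context [ndefects _ ?n] =>
      case: (spec n) => ? /=; try prune_profile; enumerate_ndefects spec
  | _ => decide_twin_profile
  end.

Lemma even_twin_profile k a n : 14 <= k -> ~~ odd k -> 0 < n ->
  a + 5 * n.+1 <= 6 * k + 3 ->
  twin_profile (odd a) (odd n) [seq ndefects (even_defects k) p | p <- block_bounds a n].
Proof.
move=> hk + hn hl.
move: (ndefects_block_bounds_sorted (even_defects k) a n)
  (ndefects_block_steps (even_defects_sorted hk) a n).
rewrite /block_bounds /=.
enumerate_ndefects (even_ndefectsP hk).
Qed.


Definition odd_defects k :=
  [:: 0; 1; 2; 3; 2 * k + 2; 2 * k + 3; 4 * k + 2; 4 * k + 3; 6 * k + 2].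

Lemma odd_defects_sorted k : 14 <= k -> sorted ltn (odd_defects k).
Proof. by move=> hk /=; lia. Qed.

Variant odd_ndefects_spec k n : nat -> Prop :=
  | OddNdefects0 of n = 0 : odd_ndefects_spec k n 0
  | OddNdefects1 of n = 1 : odd_ndefects_spec k n 1
  | OddNdefects2 of n = 2 : odd_ndefects_spec k n 2
  | OddNdefects3 of n = 3 : odd_ndefects_spec k n 3
  | OddNdefects4 of 3 < n <= 2 * k + 2 : odd_ndefects_spec k n 4
  | OddNdefects5 of n = 2 * k + 3 : odd_ndefects_spec k n 5
  | OddNdefects6 of 2 * k + 3 < n <= 4 * k + 2 : odd_ndefects_spec k n 6
  | OddNdefects7 of n = 4 * k + 3 : odd_ndefects_spec k n 7
  | OddNdefects8 of 4 * k + 3 < n <= 6 * k + 2 : odd_ndefects_spec k n 8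
  | OddNdefects9 of 6 * k + 2 < n : odd_ndefects_spec k n 9.

Lemma odd_ndefectsP k (hk : 14 <= k) n :
  odd_ndefects_spec k n (ndefects (odd_defects k) n).
Proof.
have [] := ndefects_bounds (odd_defects_sorted hk) n.
move: (ndefects _ n) => j; rewrite /odd_defects /=.
by case: j => [|[|[|[|[|[|[|[|[|[|j]]]]]]]]]] //= *; constructor; lia.
Qed.

Lemma odd_twin_profile k a n : 14 <= k -> odd k -> 0 < n ->
  a + 5 * n.+1 <= 6 * k + 3 ->
  twin_profile (odd a) (odd n) [seq ndefects (odd_defects k) p | p <- block_bounds a n].
Proof.
move=> hk + hn hl.
move: (ndefects_block_bounds_sorted (odd_defects k) a n)
  (ndefects_block_steps (odd_defects_sorted hk) a n).
rewrite /block_bounds /=.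
enumerate_ndefects (odd_ndefectsP hk).
Qed.

Lemma odd_twin_profile_long k a n : 14 <= k -> k %% 10 = 5 -> 0 < n ->
  a + 5 * n.+1 = 6 * k + 4 ->
  twin_profile (odd a) (odd n) [seq ndefects (odd_defects k) p | p <- block_bounds a n].
Proof.
move=> hk + hn hl.
move: (ndefects_block_bounds_sorted (odd_defects k) a n)
  (ndefects_block_steps (odd_defects_sorted hk) a n).
rewrite /block_bounds /=.
enumerate_ndefects (odd_ndefectsP hk).
Qed.

Lemma alt_word_avoids D k l : sorted ltn D -> 6 <= k -> l < 7 * k ->
  {in D &, forall x y, ~~ (x + 4 <= y <= x + 24)} ->
  (forall s, s + 2 * k <= l -> exists2 d, d \in D & s <= d <= s + 2 * k - 2) ->
  (forall a n, 0 < n -> a + 5 * n.+1 <= l ->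
    twin_profile (odd a) (odd n) [seq ndefects D p | p <- block_bounds a n]) ->
  ~ has_pow_or_antipow k 5 (mkseq (alt_letter D) l).
Proof.
move=> sD hk hl sparse dense twins [w [hf [hpow|hanti]]].
  exact: alt_word_kpower_free hf hpow.
exact: alt_word_antipower_free hf hanti.
Qed.

Lemma even_word_avoids k l : 14 <= k -> ~~ odd k -> l <= 6 * k + 3 ->
  ~ has_pow_or_antipow k 5 (mkseq (alt_letter (even_defects k)) l).
Proof.
move=> hk hodd hl; apply: alt_word_avoids; try lia.
- exact: even_defects_sorted.
- by move=> x y; rewrite /even_defects !inE; lia.
- move=> s hs; rewrite /even_defects; case: (even_ndefectsP hk s) => hs';
    [exists k.+1 | exists (3 * k) | exists (3 * k + 1) | exists (5 * k) | exfalso];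
    rewrite ?inE; lia.
- by move=> a n hn ha; apply: even_twin_profile => //; lia.
Qed.

Lemma odd_word_avoids k l : 14 <= k -> odd k ->
  l <= 6 * k + 3 \/ l = 6 * k + 4 /\ k %% 10 = 5 ->
  ~ has_pow_or_antipow k 5 (mkseq (alt_letter (odd_defects k)) l).
Proof.
move=> hk hodd hl; apply: alt_word_avoids; try lia.
- exact: odd_defects_sorted.
- by move=> x y; rewrite /odd_defects !inE; lia.
- move=> s hs; rewrite /odd_defects; case: (odd_ndefectsP hk s) => hs';
    [exists 0 | exists 1 | exists 2 | exists 3 | exists (2 * k + 2) | exists (2 * k + 3)
    | exists (4 * k + 2) | exists (4 * k + 3) | exists (6 * k + 2) | exfalso];
    rewrite ?inE; lia.
- move=> a n hn ha; have [short|[long h5]] :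
      a + 5 * n.+1 <= 6 * k + 3 \/ a + 5 * n.+1 = 6 * k + 4 /\ k %% 10 = 5 by lia.
    exact: odd_twin_profile.
  exact: odd_twin_profile_long.
Qed.

Lemma N_ge_of_avoiders k r m :
  (forall l, l < m -> exists2 s, size s = l & ~ has_pow_or_antipow k r s) -> N_ge k r m.
Proof. by move=> avoid l hN; rewrite leqNgt; apply/negP => /avoid [s hs []]; apply: hN. Qed.

Unset Implicit Arguments.

Theorem theorem15 (k : nat) (hk : 14 <= k) :
  N_ge k 5 (6 * k + 4) /\ (k %% 10 = 5 -> N_ge k 5 (6 * k + 5)).
Proof.
have avoid l : l <= 6 * k + 3 \/ l = 6 * k + 4 /\ k %% 10 = 5 ->
    exists2 s, size s = l & ~ has_pow_or_antipow k 5 s.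
  move=> hl; case: (boolP (odd k)) => hodd.
    exists (mkseq (alt_letter (odd_defects k)) l); [exact: size_mkseq | exact: odd_word_avoids].
  exists (mkseq (alt_letter (even_defects k)) l); first exact: size_mkseq.
  by apply: even_word_avoids => //; lia.
by split=> [|h5]; apply: N_ge_of_avoiders => l hl; apply: avoid; lia.
Qed.
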